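(* Let $1\le f\le\lfloor n/2\rfloor$ and $d\in\mathcal D_f$. Then $\ell(wd)\ge\ell(d)$ for every $w\in\Psi$.
   Context: $\mathfrak S_n$ acts on $\{1,\dots,n\}$ on the right: $(a)(\sigma\tau)=((a)\sigma)\tau$; $s_j=(j,j+1)$, $\ell$ is the Coxeter length (number of inversions). Let $\nu_f=((2^f),(n-2f))$ and $\mathfrak t^{\nu_f}$ the bitableau with $1,\dots,n$ entered in order along the rows of the first component (shape $(2^f)$) and then along the single row of the second component; $\mathfrak t^{\nu_f}d$ replaces each entry $a$ by $(a)d$. $\mathcal D_{\nu_f}$ is the set of $d\in\mathfrak S_n$ such that $\mathfrak t^{\nu_f}d$ is row standard and the first column of its first component increases from top to bottom; $\mathcal D_f=\mathcal D_{\nu_f}\cap\mathfrak S_{2f}$. $\mathfrak S_{(2^f)}$ is the subgroup generated by $s_1,s_3,\dots,s_{2f-1}$; $\Pi$ is the subgroup of $\mathfrak S_{2f}$ permuting the rows of the first component of $\mathfrak t^{\nu_f}$ while keeping the entries within rows in order (generated by $\tilde s_i=s_{2i}s_{2i-1}s_{2i+1}s_{2i}$, $1\le i\le f-1$); $\Psi=\mathfrak S_{(2^f)}\rtimes\Pi$. *)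

(* Convention: {1,...,n} is encoded as 'I_n via a |-> a-1.
   MathComp's permutation product satisfies (s * t) x = t (s x) (permM),
   i.e. it is exactly the right action of the paper: (a)(st) = ((a)s)t. *)
From mathcomp Require Import all_boot all_order all_fingroup.
Set Implicit Arguments. Unset Strict Implicit. Unset Printing Implicit Defensive.

Local Open Scope group_scope.

(* The value (a)d, for a 1-indexed point a in {1,...,n} (0 outside). *)
Definition pt (n : nat) (d : 'S_n) (a : nat) : nat :=
  if insub a.-1 is Some i then (val (d i)).+1 else 0.

(* s_j = (j, j+1) (1-indexed); identity if j,j+1 not both in {1..n}. *)
Definition sj (n j : nat) : 'S_n :=
  match (insub j.-1 : option 'I_n), (insub j : option 'I_n) with
  | Some x, Some y => tperm x y
  | _, _ => 1
  end.

Definition stilde (n i : nat) : 'S_n :=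
  sj n i.*2 * sj n i.*2.-1 * sj n i.*2.+1 * sj n i.*2.

(* Coxeter length = number of inversions. *)
Definition ell (n : nat) (s : 'S_n) : nat :=
  #|[set p : 'I_n * 'I_n | (p.1 < p.2) && (s p.2 < s p.1)]|.

Definition S2f_gens (n f : nat) : {set 'S_n} :=
  [set sj n (k : nat).*2.+1 | k : 'I_f].
Definition Pi_gens (n f : nat) : {set 'S_n} :=
  [set stilde n (k : nat).+1 | k : 'I_f.-1].
Definition Psi (n f : nat) : {set 'S_n} := <<S2f_gens n f :|: Pi_gens n f>>.

Definition inS (n m : nat) (d : 'S_n) : Prop :=
  forall a, m < a <= n -> pt d a = a.

(* d in D_{nu_f}: t^{nu_f} d row standard, first column of first
   component increasing. Rows of first component: (2i-1, 2i), 1<=i<=f;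
   second component row: 2f+1, ..., n. *)
Definition in_Dnu (n f : nat) (d : 'S_n) : Prop :=
  [/\ (forall i, 1 <= i <= f -> pt d i.*2.-1 < pt d i.*2),
      (forall a, f.*2 < a -> a < n -> pt d a < pt d a.+1)
    & (forall i, 1 <= i < f -> pt d i.*2.-1 < pt d i.*2.+1)].

Definition in_Df (n f : nat) (d : 'S_n) : Prop := in_Dnu f d /\ inS f.*2 d.

From mathcomp Require Import all_boot all_order all_fingroup zify.
Set Implicit Arguments. Unset Strict Implicit. Unset Printing Implicit Defensive.

(* Write the points 1..n as 0..n-1, so that row k of the first component of
   t^{nu_f} is {2k, 2k+1} and x %/ 2 is the row of x.  Every generator of Psi
   maps rows onto rows, hence so does every w in Psi and its inverse.  An
   inversion (a, b) of d in D_f is forced to have a = 2k+1 the second entry of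
   its row, b in a later row, and d(2k) < d(b) (rows and first column of
   t^{nu_f} d increase).  Sending (a, b) to (w^-1 a, w^-1 b) when this is still
   increasing, and to (w^-1 b, w^-1 (a-1)) otherwise, injects the inversions of
   d into those of w d: in the second case w^-1 a and w^-1 (a-1) share a row
   lying above that of w^-1 b. *)

Definition tperm_nat (a b z : nat) := if z == a then b else if z == b then a else z.

Lemma sjE n j (x : 'I_n) : j < n -> val (sj n j x) = tperm_nat j.-1 j x.
Proof.
move=> j_lt; have j1_lt : j.-1 < n by lia.
rewrite /sj (insubT (fun k => k < n) j1_lt) (insubT (fun k => k < n) j_lt) /tperm_nat.
case: tpermP => [->|->|ne1 ne2] /=; first by rewrite eqxx.
- by case: eqP => [|_]; [lia | rewrite eqxx].
- case: eqP => [e|_]; first by case: ne1; apply: val_inj.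
  by case: eqP => [e|//]; case: ne2; apply: val_inj.
Qed.

Lemma tperm_natP a b z :
  [\/ z = a /\ tperm_nat a b z = b, z = b /\ z <> a /\ tperm_nat a b z = a
     | z <> a /\ z <> b /\ tperm_nat a b z = z].
Proof. by rewrite /tperm_nat; case: eqP => ?; [|case: eqP => ?]; constructor. Qed.

Lemma stildeE n i (x : 'I_n) : 0 < i -> i.*2.+1 < n ->
  val (stilde n i x) =
    if x %/ 2 == i.-1 then x + 2 else if x %/ 2 == i then x - 2 else x.
Proof.
move=> i_gt0 i_lt; rewrite /stilde !permM !sjE; try lia.
case: eqP => [row_x|?]; [|case: eqP => [row_x|?]];
repeat match goal with |- context [tperm_nat ?a ?b ?z] =>
  lazymatch z with context [tperm_nat _ _ _] => fail | _ =>
    case: (tperm_natP a b z) => [[? ->]|[? [? ->]]|[? [? ->]]]; try (exfalso; lia) end end.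
all: lia.
Qed.

Definition row_perms n : {set 'S_n} :=
  [set g : 'S_n | [forall x : 'I_n, forall y : 'I_n,
                     (x %/ 2 == y %/ 2) ==> (g x %/ 2 == g y %/ 2)]].

Lemma row_permsP n (g : 'S_n) :
  reflect (forall x y : 'I_n, x %/ 2 = y %/ 2 -> g x %/ 2 = g y %/ 2)
          (g \in row_perms n).
Proof.
rewrite inE; apply: (iffP forallP) => [h x y /eqP xy | h x].
  by apply/eqP; move/forallP/(_ y)/implyP: (h x); apply.
by apply/forallP => y; apply/implyP => /eqP/h/eqP.
Qed.

Lemma group_set_row_perms n : group_set (row_perms n).
Proof.
apply/group_setP; split; first by apply/row_permsP => x y; rewrite !perm1.
move=> g h /row_permsP gP /row_permsP hP; apply/row_permsP => x y xy.
by rewrite !permM; apply/hP/gP.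
Qed.

Canonical row_perms_group n := group (group_set_row_perms n).

Lemma Psi_sub_row_perms n f : f.*2 <= n -> Psi n f \subset row_perms n.
Proof.
move=> f_le; rewrite /Psi (gen_subG _ (row_perms_group n)) subUset.
apply/andP; split; apply/subsetP => _ /imsetP[k _ ->]; apply/row_permsP => x y xy.
- have k_lt : k.*2.+1 < n by have := ltn_ord k; lia.
  rewrite !sjE //=.
  by case: (tperm_natP k.*2 k.*2.+1 x) => [[? ->]|[? [? ->]]|[? [? ->]]];
     case: (tperm_natP k.*2 k.*2.+1 y) => [[? ->]|[? [? ->]]|[? [? ->]]]; lia.
- have k_lt : k.+1.*2.+1 < n by have := ltn_ord k; lia.
  rewrite !stildeE //; repeat case: eqP; lia.
Qed.

Definition inversions n (s : 'S_n) : {set 'I_n * 'I_n} :=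
  [set p : 'I_n * 'I_n | (p.1 < p.2) && (s p.2 < s p.1)].

Definition ord_prev n (a : 'I_n) : 'I_n := insubd a a.-1.

Lemma ord_prevE n (a : 'I_n) : val (ord_prev a) = a.-1.
Proof. by rewrite val_insubd; case: ifP => // /negbT; have := ltn_ord a; lia. Qed.

Section RowPermutationsAndLength.

Variables (n : nat) (d w : 'S_n).

Hypothesis d_inversions : forall a b : 'I_n, (a, b) \in inversions d ->
  [/\ a %% 2 = 1, a %/ 2 < b %/ 2 & d (ord_prev a) < d b].

Hypothesis w_row : w \in row_perms n.

Let u := (w^-1)%g.

Let phi (p : 'I_n * 'I_n) : 'I_n * 'I_n :=
  if u p.1 < u p.2 then (u p.1, u p.2) else (u p.2, u (ord_prev p.1)).

Lemma phi_inversions p : p \in inversions d -> phi p \in inversions (w * d)%g.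
Proof.
case: p => a b /[dup] ab_inv /d_inversions[a_odd ab_row d_prev].
move: ab_inv; rewrite !inE /phi /= => /andP[ab dba].
have wu z : w (u z) = z by rewrite permKV.
case: ifP => [uab | /negbT]; first by rewrite /= !permM !wu uab.
have /row_permsP uP : u \in row_perms n by rewrite groupV.
have /row_permsP wP := w_row.
have u_row : u (ord_prev a) %/ 2 = u a %/ 2 by apply: uP; rewrite ord_prevE; lia.
have u_sep : u a %/ 2 <> u b %/ 2 by move=> /wP; rewrite !wu; lia.
by rewrite -leqNgt /= !permM !wu d_prev andbT => uba; lia.
Qed.

Lemma phi_inj : {in inversions d &, injective phi}.
Proof.
move=> [a b] [a' b'] ab_inv ab'_inv.
have [a_odd _ _] := d_inversions ab_inv; have [a'_odd _ _] := d_inversions ab'_inv.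
move: ab_inv ab'_inv; rewrite !inE /phi /= => /andP[ab _] /andP[ab' _].
have u_inj_nat (x y : 'I_n) : u x = u y -> (x : nat) = y by move/perm_inj->.
case: ifP => _; case: ifP => _ [/u_inj_nat e1 /u_inj_nat e2];
  rewrite ?ord_prevE in e1 e2; try lia.
- by rewrite (val_inj e1) (val_inj e2).
- have -> : a = a' by apply: ord_inj; lia.
  by rewrite (val_inj e1).
Qed.

Lemma ell_le_mul_row_perm : ell d <= ell (w * d)%g.
Proof.
rewrite -[ell d]/#|inversions d| -[ell _]/#|inversions (w * d)%g|.
rewrite -(card_in_imset phi_inj).
by apply/subset_leq_card/subsetP => _ /imsetP[p /phi_inversions ? ->].
Qed.

End RowPermutationsAndLength.

Lemma pt_ord n (d : 'S_n) (x : 'I_n) : pt d x.+1 = (d x).+1.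
Proof. by rewrite /pt /= valK. Qed.

Section DistinguishedRepresentatives.

Variables (n f : nat) (d : 'S_n).

Hypothesis d_Df : in_Df f d.

Lemma Df_fix (x : 'I_n) : f.*2 <= x -> d x = x.
Proof.
have [_ d_fix] := d_Df; move=> x_ge; apply/val_inj/succn_inj.
by rewrite -pt_ord d_fix //; have := ltn_ord x; lia.
Qed.

Lemma Df_row_lt k : k < f -> pt d k.*2.+1 < pt d k.*2.+2.
Proof. by have [[d_row _ _] _] := d_Df; move=> k_lt; apply: (d_row k.+1); lia. Qed.

Lemma Df_col_lt i j : i < j < f -> pt d i.*2.+1 < pt d j.*2.+1.
Proof.
have [[_ _ d_col] _] := d_Df.
elim: j => // j IH /andP[ij jf].
have step : pt d j.*2.+1 < pt d j.+1.*2.+1.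
  by have := d_col j.+1; rewrite doubleS; apply; lia.
move: ij; rewrite ltnS leq_eqVlt => /orP[/eqP-> // | ij].
by apply: ltn_trans step; apply: IH; lia.
Qed.

Lemma Df_head_lt (x y : 'I_n) :
  x %% 2 = 0 -> x %/ 2 < y %/ 2 -> y < f.*2 -> d x < d y.
Proof.
move=> x_even xy y_lt; rewrite -ltnS -!pt_ord.
have -> : x.+1 = (x %/ 2).*2.+1 by lia.
have col := Df_col_lt (i := x %/ 2) (j := y %/ 2); have row := Df_row_lt (k := y %/ 2).
have [->|->] : y.+1 = (y %/ 2).*2.+1 \/ y.+1 = (y %/ 2).*2.+2 by lia.
- by apply: col; lia.
- by apply: ltn_trans (row _); [apply: col|]; lia.
Qed.

Lemma Df_inversions (a b : 'I_n) : (a, b) \in inversions d ->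
  [/\ a %% 2 = 1, a %/ 2 < b %/ 2 & d (ord_prev a) < d b].
Proof.
rewrite inE /= => /andP[ab dba].
have b_lt : b < f.*2.
  rewrite ltnNge; apply/negP => b_ge; move: dba; rewrite (Df_fix b_ge) => ba.
  have da_fix : d (d a) = d a by apply: Df_fix; lia.
  by move: ba; rewrite (perm_inj da_fix); lia.
have row_ab : a %/ 2 < b %/ 2.
  rewrite ltnNge; apply/negP => ba_row.
  have a_first : a.+1 = (a %/ 2).*2.+1 by lia.
  have b_second : b.+1 = (a %/ 2).*2.+2 by lia.
  by have := Df_row_lt (k := a %/ 2); rewrite -b_second -a_first !pt_ord; lia.
have a_odd : a %% 2 = 1.
  have [a_even|//] : a %% 2 = 0 \/ a %% 2 = 1 by lia.
  by have := Df_head_lt a_even row_ab b_lt; lia.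
by split=> //; apply: Df_head_lt => //; rewrite ord_prevE; lia.
Qed.

End DistinguishedRepresentatives.

Theorem lemma5p7 (n f : nat) (d : 'S_n) :
  1 <= f <= n./2 -> in_Df f d ->
  forall w : 'S_n, w \in Psi n f -> ell d <= ell (w * d)%g.
Proof.
move=> /andP[_ f_le] d_Df w w_Psi.
have w_row : w \in row_perms n by apply: subsetP w_Psi; apply: Psi_sub_row_perms; lia.
exact: ell_le_mul_row_perm (Df_inversions d_Df) w_row.
Qed.
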